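(* Let $\mathcal{G}=\langle S,A,T,s_0,F\rangle$ be a two-player turn-based deterministic reachability game, let $Y\subseteq\mathrm{Win}_2(\mathcal{G},F)\setminus F$ and let $s\in\mathrm{Win}_2(\mathcal{G},F)\setminus F$. Then $\mathrm{DSWin}_1(\emptyset,Y)\cup\mathrm{DSWin}_1(\emptyset,\{s\})\subseteq\mathrm{DSWin}_1(\emptyset,Y\cup\{s\})$.
   Context: A two-player turn-based deterministic reachability game is a tuple $\mathcal{G}=\langle S,A,T,s_0,F\rangle$: $S$ finite, partitioned into P1 states $S_1$ and P2 states $S_2$; $A=A_1\cup A_2$ (P1 and P2 actions); $T:(S_1\times A_1)\cup(S_2\times A_2)\to S$ deterministic, possibly partial ($a$ enabled at $s$ iff $T(s,a)$ defined; every state has an enabled action); $s_0$ initial; $F\subseteq S$ a set of sink states (P2's goal). For a target $R\subseteq S$: $Z_0=R$, $Z_{k+1}=Z_k\cup\{s\in S_1:T(s,a)\in Z_k\ \forall\text{ enabled }a\}\cup\{s\in S_2:T(s,a)\in Z_k\text{ for some enabled }a\}$; $\mathrm{Win}_2(\mathcal{G},R)=\bigcup_kZ_k$; $\mathrm{rank}_{\mathcal{G},R}(s)=\min\{k:s\in Z_k\}$ ($\infty$ if none). For disjoint $X,Y\subseteq\mathrm{Win}_2(\mathcal{G},F)\setminus F$ (traps $X$, fake targets $Y$): the true game $\mathcal{G}^1_{X,Y}$ has states $S$, transitions $T_{X,Y}(q,a)=T(q,a)$ if $q\notin X\cup Y$ and $T_{X,Y}(q,a)=q$ if $q\in X\cup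 Y$; P2's perceptual game $\mathcal{G}^2_{X,Y}$ has transitions $T$ and goal $F\cup Y$, with $\mathrm{rank}_{\mathcal{G}^2_{X,Y}}:=\mathrm{rank}_{\mathcal{G},F\cup Y}$. Subjectively rationalizable actions: for $q\in S_2\cap\mathrm{Win}_2(\mathcal{G},F)\setminus(F\cup Y)$, $\mathsf{SRActs}_{X,Y}(q)=\{a\text{ enabled}:\mathrm{rank}_{\mathcal{G}^2_{X,Y}}(T(q,a))<\mathrm{rank}_{\mathcal{G}^2_{X,Y}}(q)\}$; at every other state, all enabled actions. A memoryless deterministic strategy of either player is subjectively rationalizable if it picks an action in $\mathsf{SRActs}_{X,Y}(q)$ at each of that player's states $q$. A memoryless deterministic P1 strategy $\pi_1$ is stealthy deceptive sure winning at $s$ if it is subjectively rationalizable and, for every subjectively rationalizable memoryless deterministic P2 strategy $\pi_2$, every path from $s$ generated by $(\pi_1,\pi_2)$ in the true game $\mathcal{G}^1_{X,Y}$ visits $X\cup Y$ within finitely many steps. $\mathrm{DSWin}_1(X,Y)$ is the set of states at which P1 has such a strategy. *)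

From mathcomp Require Import all_boot.
From Stdlib Require Import ClassicalEpsilon.
Set Implicit Arguments. Unset Strict Implicit. Unset Printing Implicit Defensive.

Record game := Game {
  st : finType;
  act : finType;
  isP1 : pred st;                   (* S1 ; S2 is its complement *)
  isA1 : pred act;                  (* A1 ; A2 is its complement *)
  trans : st -> act -> option st;
  init : st;
  goal : {set st}
}.

Arguments isP1 : clear implicits.
Arguments isA1 : clear implicits.
Arguments trans : clear implicits.
Arguments init : clear implicits.
Arguments goal : clear implicits.

Section Game.
Variable G : game.
Local Notation S := (st G).
Local Notation A := (act G).
Local Notation T := (trans G).

Definition enabled (s : S) (a : A) : bool := T s a != None.

Definition wf_game : Prop :=
  (forall s a, enabled s a -> isP1 G s = isA1 G a) /\
  (forall s, exists a, enabled s a) /\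
  (forall f a t, f \in goal G -> T f a = Some t -> t = f).

Definition oin (o : option S) (B : {set S}) : bool :=
  if o is Some t then t \in B else false.

Fixpoint Z (R : {set S}) (k : nat) : {set S} :=
  match k with
  | 0 => R
  | k'.+1 =>
    Z R k' :|:
    [set s | isP1 G s && [forall a, enabled s a ==> oin (T s a) (Z R k')]] :|:
    [set s | ~~ isP1 G s && [exists a, oin (T s a) (Z R k')]]
  end.

Definition Win2 (R : {set S}) (s : S) : Prop := exists k, s \in Z R k.

(* rank_{G,R}(s) = min {k | s \in Z_k}, None standing for infinity. *)
Definition rank (R : {set S}) (s : S) : option nat :=
  match excluded_middle_informative (exists k, s \in Z R k) with
  | left ex => Some (ex_minn ex)
  | right _ => None
  end.

Definition rank_lt (o1 o2 : option nat) : bool :=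
  match o1, o2 with
  | Some m, Some n => m < n
  | Some _, None => true
  | None, _ => false
  end.

(* Subjectively rationalizable actions SRActs_{X,Y}(q) (depends only on Y). *)
Definition SRAct (Y : {set S}) (q : S) (a : A) : Prop :=
  enabled q a /\
  ((~~ isP1 G q /\ Win2 (goal G) q /\ q \notin goal G :|: Y) ->
   exists t, T q a = Some t /\
     rank_lt (rank (goal G :|: Y) t) (rank (goal G :|: Y) q)).

(* memoryless deterministic strategies: functions S -> A *)
Definition SR1 (Y : {set S}) (pi1 : S -> A) : Prop :=
  forall q, isP1 G q -> SRAct Y q (pi1 q).
Definition SR2 (Y : {set S}) (pi2 : S -> A) : Prop :=
  forall q, ~~ isP1 G q -> SRAct Y q (pi2 q).

(* rho is a path from s generated by (pi1, pi2) in the true game G^1_{X,Y} *)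
Definition true_path (X Y : {set S}) (pi1 pi2 : S -> A) (s : S)
    (rho : nat -> S) : Prop :=
  rho 0 = s /\
  forall i, let q := rho i in
    if q \in X :|: Y then rho i.+1 = q
    else T q (if isP1 G q then pi1 q else pi2 q) = Some (rho i.+1).

Definition stealthy_DSW (X Y : {set S}) (pi1 : S -> A) (s : S) : Prop :=
  SR1 Y pi1 /\
  forall pi2, SR2 Y pi2 ->
    forall rho, true_path X Y pi1 pi2 s rho ->
      exists i, rho i \in X :|: Y.

Definition DSWin1 (X Y : {set S}) (s : S) : Prop :=
  exists pi1, stealthy_DSW X Y pi1 s.

End Game.

(* Adding targets can only help P1.  Let pi1 be stealthy deceptive winning for the fake
   targets Y1, and Y1 \subset Y2.  Call a state a gap at level n if it lies in the level-n
   attractor of F \cup Y2 but not in that of F \cup Y1.  P1 plays pi1, except that at a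
   gap state it moves to a gap state of lower level whenever it can.  From a gap state,
   every subjectively rationalizable P2 move (which decreases the rank towards F \cup Y2)
   also leads to a gap of lower level, so a play that meets a gap reaches Y2.  A play that
   never meets a gap sees the same ranks for both targets, so along it P2 is also
   rationalizable for Y1 and P1 plays pi1: it therefore reaches Y1 \subset Y2. *)
From Stdlib Require Import Classical ClassicalEpsilon.
From mathcomp Require Import all_boot.
Set Implicit Arguments. Unset Strict Implicit. Unset Printing Implicit Defensive.

Lemma exists_patch (U V : Type) (P : U -> V -> Prop) (f : U -> V) :
  exists g : U -> V,
    [/\ forall x, (exists y, P x y) -> P x (g x),
        forall x, P x (f x) -> g x = f x
      & forall x, ~ (exists y, P x y) -> g x = f x].
Proof.
exists (fun x => if excluded_middle_informative (P x (f x)) then f x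
  else if excluded_middle_informative (exists y, P x y)
       then epsilon (inhabits (f x)) (P x) else f x).
split=> x; case: excluded_middle_informative => // ?.
all: case: excluded_middle_informative => // ex _.
exact: epsilon_spec.
Qed.

Section Attractor.
Variable G : game.
Local Notation S := (st G).
Local Notation T := (trans G).
Implicit Types (R : {set S}) (x t : S).

Lemma oin_sub (o : option S) (B B' : {set S}) :
  B \subset B' -> oin o B -> oin o B'.
Proof. by case: o => //= t /subsetP; apply. Qed.

Lemma oin_enabled x a (B : {set S}) : oin (T x a) B -> enabled x a.
Proof. by rewrite /enabled; case: (T x a). Qed.

Lemma mem_ZS_P1 R k x : isP1 G x ->
  (x \in Z R k.+1) = (x \in Z R k) || [forall a, enabled x a ==> oin (T x a) (Z R k)].
Proof. by move=> p; rewrite /= !inE p /= orbF. Qed.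

Lemma mem_ZS_P2 R k x : ~~ isP1 G x ->
  (x \in Z R k.+1) = (x \in Z R k) || [exists a, oin (T x a) (Z R k)].
Proof. by move=> p; rewrite /= !inE (negbTE p) /= orbF. Qed.

Lemma Z_subS R k : Z R k \subset Z R k.+1.
Proof. by apply/subsetP => x; rewrite /= !inE => ->. Qed.

Lemma Z_sub_leq R m n : m <= n -> Z R m \subset Z R n.
Proof.
elim: n => [|n IH]; first by rewrite leqn0 => /eqP->.
rewrite leq_eqVlt ltnS => /predU1P[-> // | /IH sub].
exact: subset_trans sub (Z_subS R n).
Qed.

Lemma Z_sub_target R R' k : R \subset R' -> Z R k \subset Z R' k.
Proof.
move=> subR; elim: k => // k IH; apply/subsetP => x.
case: (boolP (isP1 G x)) => p; [rewrite !mem_ZS_P1 // | rewrite !mem_ZS_P2 //].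
- case/orP=> [/(subsetP IH) -> // | /forallP all]; apply/orP; right.
  by apply/forallP => a; apply/implyP => /(implyP (all a)); apply: oin_sub.
- case/orP=> [/(subsetP IH) -> // | /existsP[a xa]]; apply/orP; right.
  by apply/existsP; exists a; apply: oin_sub xa.
Qed.

Lemma Z_layer R k x : x \in Z R k -> x \notin R ->
  exists r, x \in Z R r.+1 /\ x \notin Z R r.
Proof.
elim: k => [-> // | k IH xk xR].
by case: (boolP (x \in Z R k)) => [/IH/(_ xR) // | xNk]; exists k.
Qed.

Lemma Win2_Z R R' : (forall y, y \in R -> Win2 R' y) ->
  forall k x, x \in Z R k -> Win2 R' x.
Proof.
move=> winR; elim=> [|k IH] x; first exact: winR.
case: (boolP (isP1 G x)) => p; [rewrite !mem_ZS_P1 // | rewrite !mem_ZS_P2 //].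
- case/orP=> [/IH // | /forallP all].
  have /fin_all_exists[lvl lvlP] a : exists m, enabled x a -> oin (T x a) (Z R' m).
    case: (boolP (enabled x a)) => ea; last by exists 0.
    by move: (implyP (all a) ea); case: (T x a) => //= t /IH[m tm]; exists m.
  exists (\max_a lvl a).+1; rewrite mem_ZS_P1 //; apply/orP; right.
  apply/forallP => a; apply/implyP => ea; apply: oin_sub (lvlP a ea).
  exact/Z_sub_leq/leq_bigmax.
- case/orP=> [/IH // | /existsP[a]].
  case E: (T x a) => [t|] //= /IH[m tm]; exists m.+1.
  by rewrite mem_ZS_P2 //; apply/orP; right; apply/existsP; exists a; rewrite E.
Qed.

Lemma rank_SomeP R x k : rank R x = Some k ->
  x \in Z R k /\ forall m, x \in Z R m -> k <= m.
Proof.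
by rewrite /rank; case: excluded_middle_informative => // ex [<-]; case: ex_minnP.
Qed.

Lemma rank_None R x k : rank R x = None -> x \notin Z R k.
Proof.
rewrite /rank; case: excluded_middle_informative => // nex _.
by apply/negP => xk; apply: nex; exists k.
Qed.

Lemma rank_layer R x k : x \in Z R k.+1 -> x \notin Z R k -> rank R x = Some k.+1.
Proof.
move=> xk1 xNk; case E: (rank R x) => [m|]; last first.
  by rewrite (negbTE (rank_None k.+1 E)) in xk1.
have [xm minm] := rank_SomeP E; congr Some; apply/eqP; rewrite eqn_leq minm //=.
by rewrite ltnNge; apply: contra xNk => /Z_sub_leq/subsetP; apply.
Qed.

Lemma rank_ltS R t k : rank_lt (rank R t) (Some k.+1) = (t \in Z R k).
Proof.
case E: (rank R t) => [m|] /=; last by rewrite (negbTE (rank_None k E)).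
have [tm minm] := rank_SomeP E; rewrite ltnS.
by apply/idP/idP => [le | /minm //]; exact: subsetP (Z_sub_leq R le) t tm.
Qed.

Lemma eq_rank R R' x :
  (forall k, (x \in Z R k) = (x \in Z R' k)) -> rank R x = rank R' x.
Proof.
move=> eqZ; case E: (rank R x) => [m|]; case E': (rank R' x) => [m'|] //.
- have [xm minm] := rank_SomeP E; have [xm' minm'] := rank_SomeP E'.
  by congr Some; apply/eqP; rewrite eqn_leq minm ?minm' // ?eqZ // -eqZ.
- by have [xm _] := rank_SomeP E; move: (rank_None m E'); rewrite -eqZ xm.
- by have [xm' _] := rank_SomeP E'; move: (rank_None m' E); rewrite eqZ xm'.
Qed.

Lemma SRAct_exists (Hwf : wf_game G) (Y : {set S}) x :
  ~~ isP1 G x -> exists a, SRAct Y x a.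
Proof.
move=> p; set R := goal G :|: Y.
case: (classic (Win2 (goal G) x /\ x \notin R)) => [[[k xk] xNR] | nwin]; last first.
  by have [a ea] := Hwf.2.1 x; exists a; split=> // -[_ /nwin].
have [r [xr1 xNr]] := Z_layer (subsetP (Z_sub_target k (subsetUl _ Y)) x xk) xNR.
move: (xr1); rewrite mem_ZS_P2 // (negbTE xNr) => /existsP[a].
case E: (T x a) => [t|] //= tr; exists a; split; first by rewrite /enabled E.
by move=> _; exists t; rewrite (rank_layer xr1 xNr) rank_ltS.
Qed.

End Attractor.

Section Monotonicity.
Variable G : game.
Hypothesis Hwf : wf_game G.
Variables Y1 Y2 : {set st G}.
Hypothesis subY : Y1 \subset Y2.
Hypothesis winY2 : forall y, y \in Y2 -> Win2 (goal G) y.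
Local Notation S := (st G).
Local Notation A := (act G).
Local Notation T := (trans G).
Local Notation Z1 := (Z (goal G :|: Y1)).
Local Notation Z2 := (Z (goal G :|: Y2)).

Definition Zgap n : {set S} := Z2 n :\: Z1 n.

Lemma mem_Zgap n x : (x \in Zgap n) = (x \in Z2 n) && (x \notin Z1 n).
Proof. by rewrite inE andbC. Qed.

Lemma Zgap0 : Zgap 0 \subset Y2.
Proof. by apply/subsetP => x; rewrite !inE negb_or => /andP[/andP[/negbTE-> _]]. Qed.

Definition shortcut x a :=
  exists n, [/\ x \in Zgap n.+1, x \notin Z2 n & oin (T x a) (Zgap n)].

Lemma shortcut_exists x k : isP1 G x -> x \in Zgap k.+1 -> x \notin Z2 k ->
  exists a, shortcut x a.
Proof.
move=> p gap xNk; move: (gap); rewrite mem_Zgap !mem_ZS_P1 // (negbTE xNk) /=.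
rewrite negb_or negb_forall => /andP[/forallP all /andP[_ /existsP[a]]].
rewrite negb_imply => /andP[ea aN1]; exists a, k; split=> //.
by move: (implyP (all a) ea) aN1; case: (T x a) => //= t; rewrite mem_Zgap => -> ->.
Qed.

Lemma rational_descent (pi2 : S -> A) x k : SR2 Y2 pi2 -> ~~ isP1 G x ->
  x \in Zgap k.+1 -> x \notin Z2 k -> oin (T x (pi2 x)) (Zgap k).
Proof.
move=> SRpi2 p; rewrite mem_Zgap => /andP[xk1 xN1] xNk.
have winx : Win2 (goal G) x.
  by apply: Win2_Z xk1 => y; rewrite in_setU => /orP[yF | /winY2 //]; exists 0.
have xNR : x \notin goal G :|: Y2.
  by apply: contra xNk => /(subsetP (Z_sub_leq _ (leq0n k))).
have [_ /(_ (conj p (conj winx xNR)))[t [Et]]] := SRpi2 x p.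
rewrite (rank_layer xk1 xNk) rank_ltS Et /= mem_Zgap => -> /=.
apply: contra xN1 => t1; rewrite mem_ZS_P2 //.
by apply/orP; right; apply/existsP; exists (pi2 x); rewrite Et.
Qed.

Section Play.
Variables (pi1 pi1' pi2 : S -> A) (s : S) (rho : nat -> S).
Hypothesis pi1'_shortcut : forall x, (exists a, shortcut x a) -> shortcut x (pi1' x).
Hypothesis pi1'_default : forall x, ~ (exists a, shortcut x a) -> pi1' x = pi1 x.
Hypothesis SRpi2 : SR2 Y2 pi2.
Hypothesis rho_path : true_path set0 Y2 pi1' pi2 s rho.
Hypothesis rho_avoid : forall i, rho i \notin Y2.

Lemma rho_step i :
  T (rho i) (if isP1 G (rho i) then pi1' (rho i) else pi2 (rho i)) = Some (rho i.+1).
Proof. by have := rho_path.2 i; rewrite /= in_setU in_set0 (negbTE (rho_avoid i)). Qed.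

Lemma rho_gap_free i m : rho i \notin Zgap m.
Proof.
elim/ltn_ind: m i => -[|k] IH i; apply/negP => gap.
  by move: (rho_avoid i); rewrite (subsetP Zgap0 _ gap).
case: (boolP (rho i \in Z2 k)) => [ik | iNk].
  apply: (negP (IH k (ltnSn k) i)); move: gap; rewrite !mem_Zgap ik /=.
  by case/andP=> _; apply: contra => /(subsetP (Z_subS _ _)).
have := rho_step i; case: ifP => p step.
- have [n [gapn iNn]] := pi1'_shortcut (shortcut_exists p gap iNk).
  rewrite step /= => next; apply: (negP (IH n _ i.+1)) next.
  rewrite ltnNge; apply: contra iNn => /(Z_sub_leq (goal G :|: Y2))/subsetP; apply.
  by move: gap; rewrite mem_Zgap => /andP[].
- have := rational_descent SRpi2 (negbT p) gap iNk; rewrite step /=.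
  exact/negP/IH.
Qed.

Lemma rho_rank i : rank (goal G :|: Y1) (rho i) = rank (goal G :|: Y2) (rho i).
Proof.
apply: eq_rank => k; apply/idP/idP; first exact/subsetP/Z_sub_target/setUS.
by move=> i2; have := rho_gap_free i k; rewrite mem_Zgap i2 negbK.
Qed.

Lemma rho_path_Y1 (pi2' : S -> A) :
  (forall x, SRAct Y1 x (pi2 x) -> pi2' x = pi2 x) ->
  true_path set0 Y1 pi1 pi2' s rho.
Proof.
move=> pi2'E; split=> [|i]; first exact: rho_path.1.
have iN1 : rho i \notin Y1 by apply: contra (rho_avoid i) => /(subsetP subY).
rewrite /= in_setU in_set0 (negbTE iN1); have := rho_step i.
case: ifP => p step.
  rewrite -pi1'_default // => -[a [n [gap _ _]]].
  by move: (rho_gap_free i n.+1); rewrite gap.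
rewrite pi2'E //; split=> [|[np [win iNR]]]; first by rewrite /enabled step.
have iNR2 : rho i \notin goal G :|: Y2.
  by move: iNR; rewrite !in_setU (negbTE iN1) (negbTE (rho_avoid i)).
have [_ /(_ (conj np (conj win iNR2)))[t [Et lt]]] := SRpi2 np.
move: Et lt; rewrite step => -[<-] lt; exists (rho i.+1).
by rewrite !rho_rank.
Qed.

End Play.

Lemma DSWin1_mono q : DSWin1 set0 Y1 q -> DSWin1 set0 Y2 q.
Proof.
move=> [pi1 [SRpi1 win1]].
have [pi1' [pi1'_shortcut _ pi1'_default]] := exists_patch shortcut pi1.
exists pi1'; split.
  move=> x p; split; last by case=> /negP.
  case: (classic (exists a, shortcut x a)) => [/pi1'_shortcut[n [_ _ /oin_enabled //]] |].
  by move/pi1'_default->; exact: (SRpi1 x p).1.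
move=> pi2 SRpi2 rho rho_path; apply: NNPP => noY2.
have rho_avoid i : rho i \notin Y2.
  by apply/negP => iY2; apply: noY2; exists i; rewrite in_setU in_set0.
have [pi2' [pi2'SR pi2'E _]] := exists_patch (SRAct Y1) pi2.
have SRpi2' : SR2 Y1 pi2' by move=> x p; apply/pi2'SR/SRAct_exists.
have path1 := rho_path_Y1 pi1'_shortcut pi1'_default SRpi2 rho_path rho_avoid pi2'E.
have [j] := win1 pi2' SRpi2' rho path1.
by rewrite in_setU in_set0 => /(subsetP subY) jY2; move: (rho_avoid j); rewrite jY2.
Qed.

End Monotonicity.

Theorem corollary2 (G : game) (Hwf : wf_game G)
  (Y : {set st G}) (s : st G)
  (HY : forall y, y \in Y -> Win2 (goal G) y /\ y \notin goal G)
  (Hs : Win2 (goal G) s /\ s \notin goal G) :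
  forall q, DSWin1 set0 Y q \/ DSWin1 set0 [set s] q ->
            DSWin1 set0 (Y :|: [set s]) q.
Proof.
have winYs y : y \in Y :|: [set s] -> Win2 (goal G) y.
  by rewrite !inE => /orP[/HY[] | /eqP->] //; case: Hs.
by move=> q [] /DSWin1_mono; apply=> //; [exact: subsetUl | exact: subsetUr].
Qed.
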